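(* Let $(p_0,\dots,p_{n-1})$ be a closed discrete curve with $l_k=l_0$ for all $k$ (arclength parametrized), and let $\kappa\in\mathbb{R}\setminus\{0\}$. Then the curve is an equilibrium of $L+\kappa\mathrm{Vol}$ (i.e. $\nabla_{p_k}L+\kappa\nabla_{p_k}\mathrm{Vol}=0$ for all $k$) if and only if $\theta_k\neq\pi$ for all $k$ and the discrete curvature $\frac{2}{l_0}\tan(\theta_k/2)$ equals $\kappa$ for every $k$.
   Context: A closed discrete curve is an $n$-tuple $(p_0,\dots,p_{n-1})$ of points of $\mathbb{R}^2$ ($n\ge3$), indices modulo $n$, with $l_k:=|p_{k+1}-p_k|\ne0$ for all $k$. $R_\varphi$ denotes rotation of $\mathbb{R}^2$ by $\varphi$. Fix $R\in\{R_{\pi/2},R_{-\pi/2}\}$ and set $\sigma=+1$ if $R=R_{\pi/2}$, $\sigma=-1$ if $R=R_{-\pi/2}$. Edge normal $\nu_k:=R((p_{k+1}-p_k)/l_k)$. The signed angle $\theta_k\in(-\pi,\pi]$ at vertex $p_k$ is defined by $\nu_k=R_{\sigma\theta_k}\nu_{k-1}$. Length $L=\sum_k l_k$, area $\mathrm{Vol}=\frac12\sum_k\langle p_k,\nu_k\rangle l_k$, both functions on $(\mathbb{R}^2)^n$; $\nabla_{p_k}$ is the gradient with respect to $p_k$. *)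

From Stdlib Require Import Reals Lra Arith.
From Coquelicot Require Import Coquelicot.
Open Scope R_scope.

Definition pt := (R * R)%type.
Definition padd (u v : pt) : pt := (fst u + fst v, snd u + snd v).
Definition psub (u v : pt) : pt := (fst u - fst v, snd u - snd v).
Definition pscal (c : R) (u : pt) : pt := (c * fst u, c * snd u).
Definition pdot (u v : pt) : R := fst u * fst v + snd u * snd v.
Definition pnorm (u : pt) : R := sqrt (fst u ^ 2 + snd u ^ 2).

Definition rot (phi : R) (u : pt) : pt :=
  (cos phi * fst u - sin phi * snd u, sin phi * fst u + cos phi * snd u).

(* A configuration of n points: p : nat -> pt, only p 0 .. p (n-1) matter;
   indices are taken modulo n. *)
Definition nxt (n k : nat) : nat := (S k) mod n.
Definition prv (n k : nat) : nat := (k + n - 1) mod n.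

Definition edge_len (n : nat) (p : nat -> pt) (k : nat) : R :=
  pnorm (psub (p (nxt n k)) (p k)).

Definition closed_curve (n : nat) (p : nat -> pt) : Prop :=
  (3 <= n)%nat /\ forall k, (k < n)%nat -> edge_len n p k <> 0.

Definition Rsig (sigma : R) : pt -> pt := rot (sigma * (PI / 2)).

Definition normal (sigma : R) (n : nat) (p : nat -> pt) (k : nat) : pt :=
  Rsig sigma (pscal (/ edge_len n p k) (psub (p (nxt n k)) (p k))).

Definition Len (n : nat) (q : nat -> pt) : R :=
  sum_n (fun k => edge_len n q k) (n - 1).
Definition Vol (sigma : R) (n : nat) (q : nat -> pt) : R :=
  / 2 * sum_n (fun k => pdot (q k) (normal sigma n q k) * edge_len n q k) (n - 1).

Definition upd (q : nat -> pt) (k : nat) (v : pt) : nat -> pt :=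
  fun j => if Nat.eqb j k then v else q j.

Definition grad_at (F : (nat -> pt) -> R) (q : nat -> pt) (k : nat) (g : pt) : Prop :=
  is_derive (fun t => F (upd q k (fst (q k) + t, snd (q k)))) 0 (fst g) /\
  is_derive (fun t => F (upd q k (fst (q k), snd (q k) + t))) 0 (snd g).

Definition equilibrium (sigma kappa : R) (n : nat) (p : nat -> pt) : Prop :=
  forall k, (k < n)%nat ->
    exists gL gV, grad_at (Len n) p k gL /\ grad_at (Vol sigma n) p k gV /\
      padd gL (pscal kappa gV) = (0, 0).

(* Write T_j = (p_{j+1} - p_j) / l_j for the unit tangents and J_sigma = R_{sigma pi/2}.
   1. Gradients (valid for any closed curve): differentiating the sums defining L and Vol
      along a motion of the single point p_k gives
        grad_{p_k} L = T_{k-1} - T_k,    grad_{p_k} Vol = 1/2 J_sigma (p_{k+1} - p_{k-1}),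
      so equilibrium is a force balance at each vertex ([equilibrium_iff_balanced]).
   2. Equal lengths l: the balance at p_k reads
        (T_{k-1} - T_k) + lambda J_sigma (T_{k-1} + T_k) = 0,   lambda = kappa l / 2,
      and the turning relation of the normals gives T_k = R_{sigma theta_k} T_{k-1}.
   3. Planar trigonometry: in the orthogonal frame (T_{k-1}, J_sigma T_{k-1}) the left side
      has coefficients 2 sin h (sin h - lambda cos h) and -2 cos h (sin h - lambda cos h),
      h = theta_k / 2, which vanish iff cos h <> 0 and tan h = lambda, i.e. iff theta_k <> pi
      and 2 / l tan (theta_k / 2) = kappa ([vertex_balance]). *)

From Stdlib Require Import Reals Lra Lia.
From Coquelicot Require Import Coquelicot.
Open Scope R_scope.

(* Coquelicot states sums in the carrier of [R_AbelianMonoid]; restating such an equality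
   at type [R] makes it accessible to [ring]. *)
Ltac ring_R := match goal with |- ?a = ?b => change (a = b :> R); ring end.

(* Cyclic indices.  [nxt n] and [prv n] are mutually inverse on {0,..,n-1}; this is what
   lets a sum over edges pick out the two edges incident to a vertex. *)
Lemma prv_lt (n k : nat) : (1 <= n)%nat -> (prv n k < n)%nat.
Proof. intros; unfold prv; apply Nat.mod_upper_bound; lia. Qed.

Lemma nxt_prv (n k : nat) : (k < n)%nat -> nxt n (prv n k) = k.
Proof.
  intros Hk; unfold nxt, prv.
  destruct k as [| k].
  - rewrite (Nat.mod_small (0 + n - 1)) by lia.
    replace (S (0 + n - 1)) with n by lia; apply Nat.Div0.mod_same.
  - replace (S k + n - 1)%nat with (k + 1 * n)%nat by lia.
    rewrite Nat.Div0.mod_add, (Nat.mod_small k) by lia; apply Nat.mod_small; lia.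
Qed.

Lemma prv_nxt (n j : nat) : (j < n)%nat -> prv n (nxt n j) = j.
Proof.
  intros Hj; unfold nxt, prv.
  destruct (Nat.eq_dec (S j) n) as [Hlast | Hlast].
  - rewrite Hlast, Nat.Div0.mod_same, Nat.mod_small; lia.
  - rewrite (Nat.mod_small (S j)) by lia.
    replace (S j + n - 1)%nat with (j + 1 * n)%nat by lia.
    rewrite Nat.Div0.mod_add; apply Nat.mod_small; lia.
Qed.

Lemma nxt_eqb_prv (n j k : nat) : (j < n)%nat -> (k < n)%nat ->
  Nat.eqb (nxt n j) k = Nat.eqb j (prv n k).
Proof.
  intros Hj Hk.
  destruct (Nat.eqb_spec (nxt n j) k) as [E | E], (Nat.eqb_spec j (prv n k)) as [F | F];
    auto; exfalso.
  - apply F; rewrite <- E; symmetry; apply prv_nxt, Hj.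
  - apply E; rewrite F; apply nxt_prv, Hk.
Qed.

Definition indb (b : bool) : R := if b then 1 else 0.

Lemma sum_indicator (f : nat -> R) (k m : nat) : (k <= m)%nat ->
  sum_n (fun j => indb (Nat.eqb j k) * f j) m = f k :> R.
Proof.
  induction m as [| m IH]; intros Hk.
  - rewrite sum_O; replace k with 0%nat by lia; simpl; ring.
  - rewrite sum_Sn; change (@plus R_AbelianMonoid) with Rplus.
    destruct (Nat.eq_dec k (S m)) as [-> | Hne].
    + rewrite (sum_n_ext_loc _ (fun _ => 0)), sum_n_const, Nat.eqb_refl.
      * cbv [indb]; ring.
      * intros j Hj; destruct (Nat.eqb_spec j (S m)); [lia | apply Rmult_0_l].
    + rewrite IH by lia; destruct (Nat.eqb_spec (S m) k); [lia | cbv [indb]; ring].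
Qed.

Lemma sum_select (n k : nat) (f g : nat -> R) : (k < n)%nat ->
  sum_n (fun j => indb (Nat.eqb j k) * f j + indb (Nat.eqb (nxt n j) k) * g j) (n - 1)
  = f k + g (prv n k).
Proof.
  intros Hk.
  rewrite (sum_n_plus (G := R_AbelianMonoid)), sum_indicator by lia.
  rewrite (sum_n_ext_loc _ (fun j => indb (Nat.eqb j (prv n k)) * g j)).
  - rewrite sum_indicator; [reflexivity |].
    pose proof (prv_lt n k); lia.
  - intros j Hj; rewrite nxt_eqb_prv by lia; reflexivity.
Qed.

Lemma is_derive_sum (f : nat -> R -> R) (d : nat -> R) (m : nat) (x : R) :
  (forall j, (j <= m)%nat -> is_derive (f j) x (d j)) ->
  is_derive (fun t => sum_n (fun j => f j t) m) x (sum_n d m).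
Proof.
  induction m as [| m IH]; intros H.
  - rewrite sum_O; eapply is_derive_ext; [| apply H; lia].
    intros t; rewrite sum_O; reflexivity.
  - rewrite sum_Sn; eapply is_derive_ext.
    2: apply (is_derive_plus (K := R_AbsRing) (V := R_NormedModule));
         [apply IH; intros; apply H; lia | apply H; lia].
    intros t; rewrite sum_Sn; reflexivity.
Qed.

Definition qturn (s : R) (u : pt) : pt := (- s * snd u, s * fst u).

Lemma cos_sin_signed (s theta : R) :
  s = 1 \/ s = -1 -> cos (s * theta) = cos theta /\ sin (s * theta) = s * sin theta.
Proof.
  intros [-> | ->].
  - rewrite !Rmult_1_l; auto.
  - replace (-1 * theta) with (- theta) by ring.
    rewrite cos_neg, sin_neg; split; ring.
Qed.

Lemma Rsig_qturn (sigma : R) (u : pt) :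
  sigma = 1 \/ sigma = -1 -> Rsig sigma u = qturn sigma u.
Proof.
  intros Hs; unfold Rsig, rot, qturn.
  destruct (cos_sin_signed sigma (PI / 2) Hs) as [-> ->].
  rewrite cos_PI2, sin_PI2; f_equal; ring.
Qed.

Lemma rot_qturn (phi s : R) (u : pt) : rot phi (qturn s u) = qturn s (rot phi u).
Proof. unfold rot, qturn; simpl; f_equal; ring. Qed.

Lemma qturn_inj (s : R) (u v : pt) : s <> 0 -> qturn s u = qturn s v -> u = v.
Proof.
  destruct u as [u1 u2], v as [v1 v2]; unfold qturn; simpl.
  intros Hs Huv; injection Huv as E2 E1.
  f_equal; [apply (Rmult_eq_reg_l s) | apply (Rmult_eq_reg_l (- s))]; auto; lra.
Qed.

(* A nonzero t and J_s t are orthogonal of equal length, hence form a frame: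
   a combination A t + B J_s t vanishes only if A = B = 0. *)
Lemma qturn_frame_zero (s A B : R) (t : pt) : s <> 0 -> t <> (0, 0) ->
  (padd (pscal A t) (pscal B (qturn s t)) = (0, 0) <-> A = 0 /\ B = 0).
Proof.
  destruct t as [u v]; unfold padd, pscal, qturn; simpl; intros Hs Ht.
  assert (Hpos : 0 < u ^ 2 + v ^ 2).
  { destruct (Req_dec u 0) as [-> | Hu]; [destruct (Req_dec v 0) as [-> | Hv] |].
    - contradiction.
    - nra.
    - nra. }
  split.
  - intros H; injection H as E1 E2.
    assert (HA : A * (u ^ 2 + v ^ 2) = 0).
    { replace (A * (u ^ 2 + v ^ 2)) with (u * (A * u + B * (- s * v)) + v * (A * v + B * (s * u)))
        by ring.
      rewrite E1, E2; ring. }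
    assert (HB : s * B * (u ^ 2 + v ^ 2) = 0).
    { replace (s * B * (u ^ 2 + v ^ 2)) with (u * (A * v + B * (s * u)) - v * (A * u + B * (- s * v)))
        by ring.
      rewrite E1, E2; ring. }
    split; [nra |].
    apply Rmult_integral in HB as [HB | HB]; [| lra].
    apply Rmult_integral in HB as [HB | HB]; [contradiction | exact HB].
  - intros [-> ->]; f_equal; ring.
Qed.

(* The configuration q with its k-th point moved to q_k + t e.  Partial derivatives with
   respect to p_k are derivatives along such moves. *)
Definition shift (q : nat -> pt) (k : nat) (e : pt) (t : R) : nat -> pt :=
  upd q k (padd (q k) (pscal t e)).

Lemma shift_at (q : nat -> pt) (k : nat) (e : pt) (t : R) (i : nat) :
  shift q k e t i = padd (q i) (pscal (t * indb (Nat.eqb i k)) e).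
Proof.
  unfold shift, upd, indb; destruct (Nat.eqb_spec i k) as [-> |]; destruct (q _), e;
    unfold padd, pscal; simpl; f_equal; ring.
Qed.

(* Unit tangent of edge j; the edge normal is [normal sigma n p j = Rsig sigma (tangent n p j)]. *)
Definition tangent (n : nat) (p : nat -> pt) (j : nat) : pt :=
  pscal (/ edge_len n p j) (psub (p (nxt n j)) (p j)).

Definition gradLen (n : nat) (p : nat -> pt) (k : nat) : pt :=
  psub (tangent n p (prv n k)) (tangent n p k).

Definition gradVol (sigma : R) (n : nat) (p : nat -> pt) (k : nat) : pt :=
  pscal (/ 2) (qturn sigma (psub (p (nxt n k)) (p (prv n k)))).

Lemma is_derive_edge (a b e : pt) (alpha beta : R) : pnorm (psub a b) <> 0 ->
  is_derive (fun t => pnorm (psub (padd a (pscal (t * alpha) e)) (padd b (pscal (t * beta) e))))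
    0 ((alpha - beta) * (pdot (psub a b) e / pnorm (psub a b))).
Proof.
  destruct a as [a1 a2], b as [b1 b2], e as [e1 e2].
  unfold pnorm, psub, padd, pscal, pdot; cbn [fst snd]; intros Hnz.
  assert (Hpos : 0 < (a1 - b1) ^ 2 + (a2 - b2) ^ 2).
  { assert (Hnn : 0 <= (a1 - b1) ^ 2 + (a2 - b2) ^ 2)
      by (pose proof (pow2_ge_0 (a1 - b1)); pose proof (pow2_ge_0 (a2 - b2)); lra).
    destruct (Rle_lt_or_eq_dec _ _ Hnn) as [| E]; [auto |].
    rewrite <- E, sqrt_0 in Hnz; lra. }
  set (r := (a1 - b1) ^ 2 + (a2 - b2) ^ 2) in *.
  auto_derive.
  - match goal with |- 0 < ?X => replace X with r by (unfold r; ring) end; exact Hpos.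
  - match goal with |- context [sqrt ?X] => replace X with r by (unfold r; ring) end.
    field; exact Hnz.
Qed.

Lemma is_derive_area_term (s : R) (a b e : pt) (alpha beta : R) :
  is_derive (fun t => pdot (padd b (pscal (t * beta) e))
                   (qturn s (psub (padd a (pscal (t * alpha) e)) (padd b (pscal (t * beta) e)))))
    0 (beta * (pdot e (qturn s (psub a b)) - pdot b (qturn s e)) + alpha * pdot b (qturn s e)).
Proof.
  destruct a as [a1 a2], b as [b1 b2], e as [e1 e2].
  unfold qturn, psub, padd, pscal, pdot; cbn [fst snd].
  auto_derive; [exact I | ring].
Qed.

(* For sigma = +-1 the area term of an edge is <q_j, J_sigma (q_{j+1} - q_j)>; this form is
   polynomial in the points and also valid for a degenerate edge. *)
Lemma area_term (sigma : R) (n : nat) (q : nat -> pt) (j : nat) : sigma = 1 \/ sigma = -1 ->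
  pdot (q j) (normal sigma n q j) * edge_len n q j
  = pdot (q j) (qturn sigma (psub (q (nxt n j)) (q j))).
Proof.
  intros Hs; unfold normal; rewrite Rsig_qturn by exact Hs; unfold edge_len.
  destruct (psub (q (nxt n j)) (q j)) as [d1 d2] eqn:Hd, (q j) as [x y].
  destruct (Req_dec (pnorm (d1, d2)) 0) as [H0 | H0].
  - unfold pnorm in H0; cbn [fst snd] in H0.
    apply sqrt_eq_0 in H0; [| nra].
    assert (d1 = 0) by nra; assert (d2 = 0) by nra; subst.
    unfold qturn, pscal, pdot; cbn [fst snd]; ring.
  - unfold qturn, pscal, pdot; cbn [fst snd]; field; exact H0.
Qed.

Lemma pdot_psub_l (u v e : pt) : pdot (psub u v) e = pdot u e - pdot v e.
Proof. unfold pdot, psub; simpl; ring. Qed.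

Lemma pdot_pscal_l (c : R) (u e : pt) : pdot (pscal c u) e = c * pdot u e.
Proof. unfold pdot, pscal; simpl; ring. Qed.

Lemma is_derive_Len (n : nat) (p : nat -> pt) (k : nat) (e : pt) :
  closed_curve n p -> (k < n)%nat ->
  is_derive (fun t => Len n (shift p k e t)) 0 (pdot (gradLen n p k) e).
Proof.
  intros [_ Hl] Hk.
  set (F j := pdot (psub (p (nxt n j)) (p j)) e / edge_len n p j).
  replace (pdot (gradLen n p k) e)
    with (sum_n (fun j => (indb (Nat.eqb (nxt n j) k) - indb (Nat.eqb j k)) * F j) (n - 1)).
  - apply is_derive_sum; intros j Hj.
    eapply is_derive_ext; [| apply is_derive_edge, Hl; lia].
    intros t; unfold edge_len; rewrite !shift_at; reflexivity.
  - rewrite (sum_n_ext _ (fun j => indb (Nat.eqb j k) * - F j + indb (Nat.eqb (nxt n j) k) * F j))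
      by (intros j; ring_R).
    rewrite sum_select by exact Hk.
    unfold gradLen, tangent; rewrite pdot_psub_l, !pdot_pscal_l.
    unfold F, Rdiv; ring_R.
Qed.

Lemma is_derive_Vol (sigma : R) (n : nat) (p : nat -> pt) (k : nat) (e : pt) :
  sigma = 1 \/ sigma = -1 -> (k < n)%nat ->
  is_derive (fun t => Vol sigma n (shift p k e t)) 0 (pdot (gradVol sigma n p k) e).
Proof.
  intros Hs Hk.
  set (f j := pdot e (qturn sigma (psub (p (nxt n j)) (p j))) - pdot (p j) (qturn sigma e)).
  set (g j := pdot (p j) (qturn sigma e)).
  replace (pdot (gradVol sigma n p k) e)
    with (/ 2 * sum_n (fun j => indb (Nat.eqb j k) * f j + indb (Nat.eqb (nxt n j) k) * g j) (n - 1)).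
  - apply is_derive_scal, is_derive_sum; intros j _.
    eapply is_derive_ext; [| apply is_derive_area_term].
    intros t; rewrite area_term by exact Hs; rewrite !shift_at; reflexivity.
  - rewrite sum_select by exact Hk.
    unfold f, g, gradVol.
    destruct e, (p k), (p (nxt n k)), (p (prv n k)); unfold pdot, qturn, psub; simpl.
    ring_R.
Qed.

Lemma grad_at_of_directional (F : (nat -> pt) -> R) (q : nat -> pt) (k : nat) (g : pt) :
  (forall e, is_derive (fun t => F (shift q k e t)) 0 (pdot g e)) -> grad_at F q k g.
Proof.
  intros H; split.
  - replace (fst g) with (pdot g (1, 0)) by (unfold pdot; simpl; ring).
    eapply is_derive_ext; [| apply H].
    intros t; unfold shift, padd, pscal; simpl; do 3 f_equal; ring.
  - replace (snd g) with (pdot g (0, 1)) by (unfold pdot; simpl; ring).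
    eapply is_derive_ext; [| apply H].
    intros t; unfold shift, padd, pscal; simpl; do 3 f_equal; ring.
Qed.

Lemma grad_at_unique (F : (nat -> pt) -> R) (q : nat -> pt) (k : nat) (g1 g2 : pt) :
  grad_at F q k g1 -> grad_at F q k g2 -> g1 = g2.
Proof.
  intros [X1 Y1] [X2 Y2]; destruct g1, g2; cbn [fst snd] in *.
  apply is_derive_unique in X1, X2, Y1, Y2; f_equal; congruence.
Qed.

Lemma equilibrium_iff_balanced (sigma kappa : R) (n : nat) (p : nat -> pt) :
  closed_curve n p -> sigma = 1 \/ sigma = -1 ->
  (equilibrium sigma kappa n p <->
   forall k, (k < n)%nat -> padd (gradLen n p k) (pscal kappa (gradVol sigma n p k)) = (0, 0)).
Proof.
  intros Hc Hs.
  assert (HL : forall k, (k < n)%nat -> grad_at (Len n) p k (gradLen n p k))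
    by (intros k Hk; apply grad_at_of_directional; intros e; apply is_derive_Len; auto).
  assert (HV : forall k, (k < n)%nat -> grad_at (Vol sigma n) p k (gradVol sigma n p k))
    by (intros k Hk; apply grad_at_of_directional; intros e; apply is_derive_Vol; auto).
  split.
  - intros Heq k Hk; destruct (Heq k Hk) as (gL & gV & HgL & HgV & E).
    rewrite (grad_at_unique _ _ _ _ _ HgL (HL k Hk)), (grad_at_unique _ _ _ _ _ HgV (HV k Hk)) in E.
    exact E.
  - intros Hbal k Hk; exists (gradLen n p k), (gradVol sigma n p k); auto.
Qed.

Lemma tangent_scale (n : nat) (p : nat -> pt) (j : nat) : edge_len n p j <> 0 ->
  psub (p (nxt n j)) (p j) = pscal (edge_len n p j) (tangent n p j).
Proof.
  intros Hl; unfold tangent; destruct (psub _ _) as [x y]; unfold pscal; simpl.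
  f_equal; field; exact Hl.
Qed.

Lemma tangent_nonzero (n : nat) (p : nat -> pt) (j : nat) : edge_len n p j <> 0 ->
  tangent n p j <> (0, 0).
Proof.
  intros Hl Ht; apply Hl.
  unfold edge_len; rewrite (tangent_scale n p j Hl), Ht; unfold pscal, pnorm; cbn [fst snd].
  replace ((edge_len n p j * 0) ^ 2 + (edge_len n p j * 0) ^ 2) with 0 by ring.
  apply sqrt_0.
Qed.

Lemma tangent_turn (sigma theta : R) (n : nat) (p : nat -> pt) (k : nat) :
  sigma = 1 \/ sigma = -1 ->
  normal sigma n p k = rot (sigma * theta) (normal sigma n p (prv n k)) ->
  tangent n p k = rot (sigma * theta) (tangent n p (prv n k)).
Proof.
  intros Hs H; change (Rsig sigma (tangent n p k)
                       = rot (sigma * theta) (Rsig sigma (tangent n p (prv n k)))) in H.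
  rewrite !Rsig_qturn, rot_qturn in H by exact Hs.
  apply (qturn_inj sigma); [destruct Hs; lra | exact H].
Qed.

Lemma balance_equal_lengths (sigma kappa l : R) (n : nat) (p : nat -> pt) (k : nat) :
  (k < n)%nat -> l <> 0 -> edge_len n p k = l -> edge_len n p (prv n k) = l ->
  padd (gradLen n p k) (pscal kappa (gradVol sigma n p k))
  = padd (psub (tangent n p (prv n k)) (tangent n p k))
         (pscal (kappa * l / 2) (qturn sigma (padd (tangent n p (prv n k)) (tangent n p k)))).
Proof.
  intros Hk Hl Hlk Hlp.
  assert (Hd : psub (p (nxt n k)) (p (prv n k))
               = padd (psub (p (nxt n (prv n k))) (p (prv n k))) (psub (p (nxt n k)) (p k))).
  { rewrite nxt_prv by exact Hk; destruct (p k), (p (nxt n k)), (p (prv n k));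
      unfold padd, psub; simpl; f_equal; ring. }
  unfold gradLen, gradVol; rewrite Hd, !tangent_scale, Hlk, Hlp by congruence.
  destruct (tangent n p k), (tangent n p (prv n k)); unfold padd, psub, pscal, qturn; simpl.
  f_equal; field.
Qed.

Lemma balance_decomposition (s theta lambda : R) (t : pt) : s = 1 \/ s = -1 ->
  padd (psub t (rot (s * theta) t)) (pscal lambda (qturn s (padd t (rot (s * theta) t))))
  = padd (pscal (1 - cos theta - lambda * sin theta) t)
         (pscal (lambda * (1 + cos theta) - sin theta) (qturn s t)).
Proof.
  intros Hs; unfold rot.
  destruct (cos_sin_signed s theta Hs) as [-> ->].
  destruct t as [u v]; unfold padd, psub, pscal, qturn; simpl.
  destruct Hs as [-> | ->]; f_equal; ring.
Qed.

Lemma half_angle_factor (theta lambda : R) :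
  let h := theta / 2 in
  1 - cos theta - lambda * sin theta = 2 * sin h * (sin h - lambda * cos h) /\
  lambda * (1 + cos theta) - sin theta = - 2 * cos h * (sin h - lambda * cos h).
Proof.
  intros h.
  replace theta with (2 * h) by (unfold h; field).
  rewrite cos_2a_cos, sin_2a.
  pose proof (sin2_cos2 h) as Hpyth; unfold Rsqr in *.
  split; nra.
Qed.

Lemma half_angle_balance (theta lambda : R) : - PI < theta <= PI ->
  (1 - cos theta - lambda * sin theta = 0 /\ lambda * (1 + cos theta) - sin theta = 0
   <-> theta <> PI /\ tan (theta / 2) = lambda).
Proof.
  intros Hrange.
  destruct (half_angle_factor theta lambda) as [-> ->].
  set (h := theta / 2).
  pose proof (sin2_cos2 h) as Hpyth; unfold Rsqr in Hpyth.
  split.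
  - intros [HA HB].
    assert (Hd : sin h - lambda * cos h = 0).
    { transitivity ((sin h - lambda * cos h) * (sin h * sin h + cos h * cos h));
        [rewrite Hpyth; ring |].
      transitivity (/ 2 * (sin h * (2 * sin h * (sin h - lambda * cos h))
                           - cos h * (- 2 * cos h * (sin h - lambda * cos h)))); [field |].
      rewrite HA, HB; ring. }
    assert (Hc : cos h <> 0) by (intros Hc; rewrite Hc in Hd, Hpyth; nra).
    split.
    + intros ->; apply Hc; unfold h; apply cos_PI2.
    + unfold tan; field_simplify_eq; [lra | exact Hc].
  - intros [Hpi Htan].
    assert (Hc : 0 < cos h) by (apply cos_gt_0; unfold h; lra).
    assert (Hd : sin h - lambda * cos h = 0).
    { rewrite <- Htan; unfold tan; field; lra. }
    rewrite Hd; split; ring.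
Qed.

Lemma vertex_balance (s theta lambda : R) (t : pt) :
  s = 1 \/ s = -1 -> t <> (0, 0) -> - PI < theta <= PI ->
  (padd (psub t (rot (s * theta) t)) (pscal lambda (qturn s (padd t (rot (s * theta) t))))
     = (0, 0)
   <-> theta <> PI /\ tan (theta / 2) = lambda).
Proof.
  intros Hs Ht Hrange.
  rewrite balance_decomposition, qturn_frame_zero by (auto; destruct Hs; lra).
  apply half_angle_balance, Hrange.
Qed.

Lemma tan_curvature (l kappa x : R) : l <> 0 ->
  (tan x = kappa * l / 2 <-> 2 / l * tan x = kappa).
Proof. intros Hl; split; intros H; [rewrite H | rewrite <- H]; field; exact Hl. Qed.

(* The argument does not
   use the hypothesis kappa <> 0. *)
Theorem mainTheorem5 (n : nat) (p : nat -> pt) (sigma kappa : R) (theta : nat -> R) :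
  closed_curve n p ->
  (sigma = 1 \/ sigma = -1) ->
  (forall k, (k < n)%nat ->
     - PI < theta k <= PI /\
     normal sigma n p k = rot (sigma * theta k) (normal sigma n p (prv n k))) ->
  (forall k, (k < n)%nat -> edge_len n p k = edge_len n p 0) ->
  kappa <> 0 ->
  (equilibrium sigma kappa n p <->
   (forall k, (k < n)%nat -> theta k <> PI) /\
   (forall k, (k < n)%nat -> 2 / edge_len n p 0 * tan (theta k / 2) = kappa)).
Proof.
  intros Hc Hs Hturn Hlen _.
  assert (Hn : (1 <= n)%nat) by (destruct Hc; lia).
  assert (Hl0 : edge_len n p 0 <> 0) by (apply Hc; lia).
  assert (Hvertex : forall k, (k < n)%nat ->
    (padd (gradLen n p k) (pscal kappa (gradVol sigma n p k)) = (0, 0) <->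
     theta k <> PI /\ 2 / edge_len n p 0 * tan (theta k / 2) = kappa)).
  { intros k Hk; destruct (Hturn k Hk) as [Hrange Hnormal].
    assert (Hlp : edge_len n p (prv n k) = edge_len n p 0) by (apply Hlen, prv_lt, Hn).
    rewrite (balance_equal_lengths sigma kappa (edge_len n p 0)) by auto.
    rewrite (tangent_turn sigma (theta k) n p k Hs Hnormal).
    rewrite vertex_balance, tan_curvature by (auto; apply tangent_nonzero; congruence).
    reflexivity. }
  rewrite equilibrium_iff_balanced by assumption.
  split.
  - intros Hbal; split; intros k Hk; apply Hvertex, Hbal; exact Hk.
  - intros [Hpi Hcurv] k Hk; apply Hvertex; auto.
Qed.
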